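(* There exists an absolute constant $C_0>0$ such that for every increasing function $F:\mathbb{N}\to\mathbb{N}$ there exist functions $d,r:\mathbb{N}\to\mathbb{N}$ such that: $d$ is nondecreasing and takes only prime values at least $5$; $d(n)\ge2r(n)+1$, $r(n)\ge n$, $d(n)-2r(n)\ge n$ and $3r(n)\le d(n)$ for all $n$; $r$ is strictly increasing; and, with $G=\langle S\rangle$, $S=\{\alpha,\beta\}$, where $\alpha=(\alpha_n)_n,\beta=(\beta_n)_n\in\prod_n\mathrm{Alt}(d(n))$, $\alpha_n=(1\;2\;\cdots\;d(n))$, $\beta_n=(1\;(1+r(n))\;(1+2r(n)))$, we have $\mathcal{R}_G^S(n)\ge F(n)$ for all $n\ge C_0$.
   Context: $\mathbb{N}=\{1,2,\dots\}$. $B_S(l)$ is the ball of radius $l$ about $e$ in the word metric of $S$. $\mathcal{R}_G^S(l)$ (full residual finiteness growth) is the minimal order of a finite group $\Delta$ admitting a homomorphism $G\to\Delta$ whose restriction to $B_S(l)$ is injective. *)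

From Stdlib Require Import ClassicalEpsilon.
From mathcomp Require Import all_boot all_fingroup.

Set Implicit Arguments.
Unset Strict Implicit.
Unset Printing Implicit Defensive.

Section ResidualFiniteness.
Variables (T : Type) (mul : T -> T -> T) (one : T) (inv : T -> T) (S : seq T).

(* a letter is a generator s_i or its inverse s_i^-1 (boolean = inverted) *)
Definition letter_val (a : bool * 'I_(size S)) : T :=
  let s := nth one S a.2 in if a.1 then inv s else s.

Definition word_eval (w : seq (bool * 'I_(size S))) : T :=
  foldr (fun a acc => mul (letter_val a) acc) one w.

Definition in_gen (x : T) : Prop := exists w, word_eval w = x.

Definition in_ball (l : nat) (x : T) : Prop :=
  exists w, size w <= l /\ word_eval w = x.

(* phi : G -> gT is a group homomorphism (values outside G irrelevant) *)
Definition hom_on_gen (gT : finGroupType) (phi : T -> gT) : Prop :=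
  forall x y, in_gen x -> in_gen y -> phi (mul x y) = (phi x * phi y)%g.

Definition admits_quotient (l m : nat) : Prop :=
  exists (gT : finGroupType) (phi : T -> gT),
    [/\ hom_on_gen phi,
        (forall x y, in_ball l x -> in_ball l y -> phi x = phi y -> x = y)
      & #|gT| = m].

Definition admits_quotientb (l m : nat) : bool :=
  if excluded_middle_informative (admits_quotient l m) then true else false.

Lemma admits_quotientbP l m : admits_quotientb l m <-> admits_quotient l m.
Proof.
rewrite /admits_quotientb; case: excluded_middle_informative => H; split => //.
Qed.

Lemma admits_quotient_exb l :
  (exists m, admits_quotient l m) -> exists m, admits_quotientb l m.
Proof. by case=> m Hm; exists m; apply/admits_quotientbP. Qed.

(* R_G^S(l): the minimal such order (0 if no such finite quotient exists,
   which never happens for residually finite G) *)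
Definition RF_growth (l : nat) : nat :=
  match excluded_middle_informative (exists m, admits_quotient l m) with
  | left H => ex_minn (admits_quotient_exb H)
  | right _ => 0
  end.

End ResidualFiniteness.

(* The product  prod_{n >= 1} Alt(d(n)) (as a subgroup of the product of *)
(* the symmetric groups; G = <alpha, beta> lies in the Alt part anyway). *)
(* Points {1,...,d} are represented by 'I_d = {0,...,d-1}.  The paper's  *)
(* index set is N = {1,2,...}; the component n = 0 of our product is     *)
(* made trivial (alpha_0 = beta_0 = id), so it plays no role.            *)

(* the d-cycle (1 2 ... d), i.e. i |-> i+1 mod d on 'I_d *)
Definition cycle_perm (m : nat) : {perm 'I_m} := perm (@ordS_inj m).

(* the 3-cycle (1  1+r  1+2r), i.e. 0 -> r -> 2r -> 0 on 'I_m
   (meaningful when 0 < r and 2r < m) *)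
Definition three_cycle (m r : nat) : {perm 'I_m} :=
  match m as k return {perm 'I_k} with
  | 0 => 1%g
  | k.+1 => (tperm (inord 0) (inord r) * tperm (inord 0) (inord (2 * r)))%g
  end.

Section ProdAlt.
Variables d r : nat -> nat.

Definition PT := forall n : nat, {perm 'I_(d n)}.
Definition pt_mul (x y : PT) : PT := fun n => (x n * y n)%g.
Definition pt_one : PT := fun n => 1%g.
Definition pt_inv (x : PT) : PT := fun n => ((x n)^-1)%g.

Definition alpha : PT := fun n => if n == 0 then 1%g else cycle_perm (d n).
Definition beta : PT := fun n => if n == 0 then 1%g else three_cycle (d n) (r n).

Definition RF_alpha_beta (l : nat) : nat :=
  RF_growth pt_mul pt_one pt_inv [:: alpha; beta] l.

End ProdAlt.

From mathcomp Require Import all_boot all_fingroup cyclic zify.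
From Stdlib Require Import FunctionalExtensionality Classical ClassicalEpsilon.

Set Implicit Arguments.
Unset Strict Implicit.
Unset Printing Implicit Defensive.

(* The commutator g = [beta, beta^(alpha^(r n))], a word of length
   4 r(n) + 4, is trivial in every coordinate m <> n (there the two 3-cycles
   have disjoint supports, thanks to the choice of r modulo d(m)) and is the
   double transposition (0 3r)(r 2r), r = r(n), in coordinate n.  Let
   phi : G -> Delta with |Delta| < d(n).  As d(n) is prime, the Chinese
   remainder theorem gives powers alpha^J with phi(alpha)^J = 1 that shift
   coordinate n by any multiple of r(n); so phi is constant on these shifts of
   g.  Thirteen of them multiply to 1 while g^2 = 1, hence phi(g) = phi(1) and
   phi is not injective on the ball of radius 4 r(n) + 4.  Taking
   d(n) >= F(4 r(n+1) + 4) yields R(l) >= F(l) whenever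
   4 r(n) + 4 <= l < 4 r(n+1) + 4. *)

Lemma commute_tperm (T : finType) (x1 x2 y1 y2 : T) :
  x1 != y1 -> x1 != y2 -> x2 != y1 -> x2 != y2 ->
  commute (tperm x1 x2) (tperm y1 y2).
Proof.
move=> n11 n12 n21 n22; apply/commgP/conjg_fixP.
by rewrite tpermJ !tpermD // eq_sym.
Qed.

Lemma cycle_permX (q k : nat) (z : 'I_q) :
  (cycle_perm q ^+ k)%g z = (z + k) %% q :> nat.
Proof.
elim: k => [|k IHk]; first by rewrite expg0 perm1 addn0 modn_small.
by rewrite expgSr permM permE /= IHk -addn1 modnDml addn1 addnS.
Qed.

Lemma three_cycleS (q r : nat) : three_cycle q.+1 r =
  (tperm (inord 0) (inord r) * tperm (inord 0) (inord (2 * r)))%g.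
Proof. by []. Qed.

Lemma commute_three_cycle_conj (q r k : nat) :
  0 < r -> k %% q + 2 * r < q ->
  k %% q != 0 -> k %% q != r -> k %% q != 2 * r ->
  commute (three_cycle q r) (three_cycle q r ^ (cycle_perm q ^+ k))%g.
Proof.
case: q => [//|q] r_gt0 ltq /eqP s0 /eqP sr /eqP s2r.
rewrite three_cycleS conjMg !tpermJ.
set s := k %% q.+1 in ltq s0 sr s2r.
have inordE v : v < q.+1 -> (inord v : 'I_q.+1) = v :> nat by move/inordK.
have rotE v : v + s < q.+1 -> (cycle_perm q.+1 ^+ k)%g (inord v) = v + s :> nat.
  by move=> lt; rewrite cycle_permX inordK ?(leq_ltn_trans (leq_addr _ _) lt) //
    -modnDmr modn_small.
apply: commuteM; apply: commute_sym; apply: commuteM; apply: commute_sym;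
  apply: commute_tperm; rewrite -val_eqE /= ?rotE ?inordE; lia.
Qed.

Definition nat_tperm (a b u : nat) : nat :=
  if u == a then b else if u == b then a else u.

Definition nat_tperms (L : seq (nat * nat)) (u : nat) : nat :=
  foldl (fun v ab => nat_tperm ab.1 ab.2 v) u L.

Definition pairs_below (N : nat) (L : seq (nat * nat)) : bool :=
  all (fun ab => (ab.1 < N) && (ab.2 < N)) L.

Definition shift_pairs (u : nat) (L : seq (nat * nat)) : seq (nat * nat) :=
  [seq (ab.1 + u, ab.2 + u) | ab <- L].

(* [tperms L] is the product of the transpositions [L] of small integers, placed
   on the points [v * r] of 'I_P; [nat_tperms L] computes its action on those
   points, so identities between such products reduce to a finite computation. *)
Section ScaledTranspositions.
Variables (P r : nat).
Hypothesis P_gt0 : 0 < P.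

Definition scaled (v : nat) : 'I_P := Ordinal (ltn_pmod (v * r) P_gt0).

Definition tperms (L : seq (nat * nat)) : {perm 'I_P} :=
  (\prod_(ab <- L) tperm (scaled ab.1) (scaled ab.2))%g.

Lemma tperms_nil : tperms [::] = 1%g.
Proof. exact: big_nil. Qed.

Variable N : nat.
Hypotheses (r_gt0 : 0 < r) (NrP : N * r < P).

Lemma scaledE v : v < N -> scaled v = v * r :> nat.
Proof. by move=> ltvN; rewrite /= modn_small //; nia. Qed.

Lemma scaled_eq u v : u < N -> v < N -> (scaled u == scaled v) = (u == v).
Proof.
move=> ltuN ltvN; apply/eqP/eqP => [/(congr1 (@nat_of_ord _))|->] //.
by rewrite !scaledE //; nia.
Qed.

Lemma tperms_scaled L u : pairs_below N L -> u < N ->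
  tperms L (scaled u) = scaled (nat_tperms L u).
Proof.
elim: L u => [|[a b] L IHL] u /=; first by rewrite tperms_nil perm1.
move=> /andP[/andP[ltaN ltbN] LN] ltuN; rewrite /tperms big_cons permM /=.
have ltN : nat_tperm a b u < N by rewrite /nat_tperm; case: (u == a); case: (u == b).
rewrite -IHL //; congr (_ _); rewrite /nat_tperm.
case: tpermP => [/eqP|/eqP|/eqP neq_a /eqP neq_b].
- by rewrite scaled_eq // => /eqP->; rewrite eqxx.
- by rewrite scaled_eq // => /eqP->; rewrite eqxx; case: eqP => [->|].
- by move: neq_a neq_b; rewrite !scaled_eq // => /negPf-> /negPf->.
Qed.

Lemma tperms_fix L z : pairs_below N L -> (forall v, v < N -> z != scaled v) ->
  tperms L z = z.
Proof.
move=> + Nz; elim: L => [|[a b] L IHL] /=; first by rewrite tperms_nil perm1.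
move=> /andP[/andP[ltaN ltbN] LN]; rewrite /tperms big_cons permM.
by rewrite tpermD ?IHL // eq_sym Nz.
Qed.

Lemma eq_tperms L1 L2 : pairs_below N L1 -> pairs_below N L2 ->
  all (fun u => nat_tperms L1 u == nat_tperms L2 u) (iota 0 N) ->
  tperms L1 = tperms L2.
Proof.
move=> L1N L2N /allP eqL; apply/permP => z.
case: (boolP [exists v : 'I_N, z == scaled v]) => [/existsP[v /eqP->]|/existsPn Nz].
  by rewrite !tperms_scaled // (eqP (eqL v _)) // mem_iota /=.
have {}Nz v : v < N -> z != scaled v by move=> ltvN; apply: (Nz (Ordinal ltvN)).
by rewrite !tperms_fix.
Qed.

Lemma tperms_cat L1 L2 : tperms (L1 ++ L2) = (tperms L1 * tperms L2)%g.
Proof. exact: big_cat. Qed.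

Lemma tpermsV L : (tperms L)^-1%g = tperms (rev L).
Proof.
elim: L => [|ab L IHL]; first by rewrite tperms_nil invg1.
by rewrite /tperms big_cons invMg IHL tpermV rev_cons big_rcons.
Qed.

Lemma tperms_conj L (s : {perm 'I_P}) u :
  pairs_below N (shift_pairs u L) ->
  (forall v, v + u < N -> s (scaled v) = scaled (v + u)) ->
  (tperms L ^ s)%g = tperms (shift_pairs u L).
Proof.
move=> + sE; elim: L => [|[a b] L IHL] /=; first by rewrite tperms_nil conj1g.
move=> /andP[/andP[ltaN ltbN] LN].
by rewrite /tperms !big_cons conjMg tpermJ !sE // -/(tperms _) IHL.
Qed.

Lemma cycle_permX_scaled v u j : v + u < N -> j = u * r %[mod P] ->
  (cycle_perm P ^+ j)%g (scaled v) = scaled (v + u).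
Proof.
move=> ltN jE; apply: val_inj; rewrite /= cycle_permX scaledE; last by lia.
by rewrite -modnDmr jE modnDmr -mulnDl.
Qed.

End ScaledTranspositions.

Lemma three_cycle_tperms P r (P_gt0 : 0 < P) : 3 * r < P ->
  three_cycle P r = tperms r P_gt0 [:: (0, 1); (0, 2)].
Proof.
case: P P_gt0 => [//|P] P_gt0 ltP.
rewrite three_cycleS /tperms !big_cons big_nil mulg1.
have inordE v : v < 3 -> (inord (v * r) : 'I_P.+1) = scaled r P_gt0 v.
  by move=> ltv3; apply: val_inj; rewrite /= inordK ?modn_small //; nia.
by rewrite -!inordE // mul0n mul1n.
Qed.

Definition double_transposition : seq (nat * nat) := [:: (0, 3); (1, 2)].

Lemma three_cycle_commutator P r (P_gt0 : 0 < P) : 0 < r -> 7 * r < P ->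
  [~ three_cycle P r, three_cycle P r ^ (cycle_perm P ^+ r)]%g =
  tperms r P_gt0 double_transposition.
Proof.
move=> r_gt0 ltP; have lt3P : 3 * r < P by lia.
rewrite (three_cycle_tperms P_gt0) // (tperms_conj (N := 7) (u := 1)) //; last first.
  by move=> v ltv; apply: (cycle_permX_scaled P_gt0 r_gt0 ltP); rewrite ?mul1n.
rewrite /commg /conjg !tpermsV -!tperms_cat.
exact: (eq_tperms P_gt0 r_gt0 ltP).
Qed.

(* Thirteen shifts of (0 3)(1 2) multiply to 1.  An odd relation is what is
   needed, as (0 3)(1 2) has order 2; none shorter exists on seven points. *)
Definition relation_shifts : seq nat := [:: 0; 1; 0; 1; 3; 0; 2; 1; 3; 0; 3; 0; 2].

Lemma tperms_relation P r (P_gt0 : 0 < P) : 0 < r -> 7 * r < P ->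
  tperms r P_gt0
    (flatten [seq shift_pairs u double_transposition | u <- relation_shifts]) = 1%g.
Proof.
move=> r_gt0 ltP; rewrite -(tperms_nil r P_gt0).
by apply: (eq_tperms P_gt0 r_gt0 ltP); vm_compute.
Qed.

Lemma tperms_double_transposition_sqr P r (P_gt0 : 0 < P) : 0 < r -> 7 * r < P ->
  tperms r P_gt0 (double_transposition ++ double_transposition) = 1%g.
Proof.
move=> r_gt0 ltP; rewrite -(tperms_nil r P_gt0).
by apply: (eq_tperms P_gt0 r_gt0 ltP); vm_compute.
Qed.

Definition letter : Type := bool * 'I_2.
Definition a_letter : letter := (false, ord0).
Definition aV_letter : letter := (true, ord0).
Definition b_letter : letter := (false, ord_max).
Definition bV_letter : letter := (true, ord_max).

Definition comm_word (k : nat) : seq letter :=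
  [:: bV_letter] ++ nseq k aV_letter ++ [:: bV_letter] ++ nseq k a_letter ++
  [:: b_letter] ++ nseq k aV_letter ++ [:: b_letter] ++ nseq k a_letter.

Lemma size_comm_word k : size (comm_word k) = 4 * k + 4.
Proof. by rewrite /comm_word !size_cat !size_nseq /=; lia. Qed.

Definition conj_word (k : nat) (w : seq letter) : seq letter :=
  nseq k aV_letter ++ w ++ nseq k a_letter.

Section Words.
Variables d r : nat -> nat.

Notation gens := [:: alpha d; beta d r].

Definition eval_word (w : seq letter) : PT d :=
  @word_eval _ (@pt_mul d) (@pt_one d) (@pt_inv d) gens w.

Lemma eval_word_cat_at w1 w2 m :
  eval_word (w1 ++ w2) m = (eval_word w1 m * eval_word w2 m)%g.
Proof.
elim: w1 => [|a w1 IHw1] /=; first by rewrite mul1g.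
by rewrite /pt_mul -mulgA -IHw1.
Qed.

Lemma eval_word_cat w1 w2 :
  eval_word (w1 ++ w2) = pt_mul (eval_word w1) (eval_word w2).
Proof. by apply: functional_extensionality_dep => m; rewrite eval_word_cat_at. Qed.

Lemma eval_word_nseq_at a k m :
  eval_word (nseq k a) m = (eval_word [:: a] m ^+ k)%g.
Proof.
elim: k => [|k IHk]; first by rewrite expg0.
by rewrite -[nseq k.+1 a]/([:: a] ++ nseq k a) eval_word_cat_at IHk expgS.
Qed.

Lemma eval_letters m :
  [/\ eval_word [:: a_letter] m = alpha d m,
      eval_word [:: aV_letter] m = ((alpha d m)^-1)%g,
      eval_word [:: b_letter] m = beta d r m
    & eval_word [:: bV_letter] m = ((beta d r m)^-1)%g].
Proof. by rewrite /eval_word /= /pt_mul /pt_inv /pt_one !mulg1. Qed.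

Lemma eval_comm_word k m :
  eval_word (comm_word k) m = [~ beta d r m, beta d r m ^ (alpha d m ^+ k)]%g.
Proof.
rewrite !eval_word_cat_at !eval_word_nseq_at.
have [-> -> -> ->] := eval_letters m.
by rewrite /commg /conjg !invMg !invgK expVgn !mulgA.
Qed.

Lemma eval_conj_word k w m :
  eval_word (conj_word k w) m = (eval_word w m ^ (alpha d m ^+ k))%g.
Proof.
rewrite !eval_word_cat_at !eval_word_nseq_at.
by have [-> -> _ _] := eval_letters m; rewrite expVgn /conjg mulgA.
Qed.

Lemma eval_word_flatten_at ws m :
  eval_word (flatten ws) m = (\prod_(w <- ws) eval_word w m)%g.
Proof.
elim: ws => [|w ws IHws]; first by rewrite big_nil.
by rewrite /= eval_word_cat_at IHws big_cons.
Qed.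

Section Homomorphism.
Variables (gT : finGroupType) (phi : PT d -> gT).
Hypothesis phiM : hom_on_gen (@pt_mul d) (@pt_one d) (@pt_inv d) gens phi.

Lemma phi_eval_cat w1 w2 :
  phi (eval_word (w1 ++ w2)) = (phi (eval_word w1) * phi (eval_word w2))%g.
Proof. by rewrite eval_word_cat; apply: phiM; [exists w1 | exists w2]. Qed.

Lemma phi_eval_nil : phi (eval_word [::]) = 1%g.
Proof.
apply: (@mulgI _ (phi (eval_word [::]))).
by rewrite mulg1 -phi_eval_cat.
Qed.

Lemma phi_eval_trivial w : (forall m, eval_word w m = 1%g) -> phi (eval_word w) = 1%g.
Proof.
move=> w1; rewrite -phi_eval_nil; congr phi.
by apply: functional_extensionality_dep => m; rewrite w1.
Qed.

Lemma phi_eval_nseq a k : phi (eval_word (nseq k a)) = (phi (eval_word [:: a]) ^+ k)%g.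
Proof.
elim: k => [|k IHk]; first by rewrite expg0 phi_eval_nil.
by rewrite -[nseq k.+1 a]/([:: a] ++ nseq k a) phi_eval_cat IHk expgS.
Qed.

Lemma phi_eval_conj k w : (phi (eval_word [:: a_letter]) ^+ k = 1)%g ->
  phi (eval_word (conj_word k w)) = phi (eval_word w).
Proof.
move=> ak1.
have akV1 : (phi (eval_word [:: aV_letter]) ^+ k = 1)%g.
  have := phi_eval_trivial (w := nseq k aV_letter ++ nseq k a_letter).
  rewrite phi_eval_cat !phi_eval_nseq ak1 mulg1; apply=> m.
  rewrite eval_word_cat_at !eval_word_nseq_at.
  by have [-> -> _ _] := eval_letters m; rewrite expVgn mulVg.
by rewrite !phi_eval_cat !phi_eval_nseq ak1 akV1 mul1g mulg1.
Qed.

Lemma phi_eval_flatten ws x : (forall w, w \in ws -> phi (eval_word w) = x) ->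
  phi (eval_word (flatten ws)) = (x ^+ size ws)%g.
Proof.
elim: ws => [|w ws IHws] wsx /=; first by rewrite phi_eval_nil.
rewrite phi_eval_cat wsx ?mem_head // IHws ?expgS // => w' ws_w'.
by apply: wsx; rewrite in_cons ws_w' orbT.
Qed.

End Homomorphism.
End Words.

Arguments eval_word : clear implicits.

Section LowerBound.
Variables (d r : nat -> nat) (n : nat).
Hypotheses (n_gt0 : 0 < n) (d_prime : prime (d n)) (r_gt0 : 0 < r n)
  (ltrd : 7 * r n < d n).
Hypothesis comm_trivial : forall m, m != n ->
  [~ beta d r m, beta d r m ^ (alpha d m ^+ r n)]%g = 1%g.

Let d_gt0 : 0 < d n := prime_gt0 d_prime.
Let n_neq0 : (n == 0) = false := negPf (lt0n_neq0 n_gt0).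
Local Notation g := (comm_word (r n)).

Lemma eval_comm_word_at : eval_word d r g n = tperms (r n) d_gt0 double_transposition.
Proof.
by rewrite eval_comm_word /alpha /beta n_neq0 three_cycle_commutator.
Qed.

Lemma eval_comm_word_off m : m != n -> eval_word d r g m = 1%g.
Proof. by move=> mn; rewrite eval_comm_word comm_trivial. Qed.

Lemma eval_conj_comm_word_at k u : u <= 3 -> k = u * r n %[mod d n] ->
  eval_word d r (conj_word k g) n =
  tperms (r n) d_gt0 (shift_pairs u double_transposition).
Proof.
move=> le_u3 kE; rewrite eval_conj_word eval_comm_word_at /alpha n_neq0.
apply: (tperms_conj (N := 7)) => [|v ltv]; first by rewrite /pairs_below /=; lia.
exact: (cycle_permX_scaled d_gt0 r_gt0 ltrd).
Qed.

Section SmallQuotient.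
Variables (gT : finGroupType) (phi : PT d -> gT).
Hypotheses (phiM : hom_on_gen (@pt_mul d) (@pt_one d) (@pt_inv d)
                     [:: alpha d; beta d r] phi)
  (small : #|gT| < d n).

Local Notation x := (phi (eval_word d r g)).
Local Notation J u := (chinese #|gT| (d n) 0 (u * r n)).

Let coprime_gT : coprime #|gT| (d n).
Proof. by rewrite coprime_sym prime_coprime // gtnNdvd // -cardsT cardG_gt0. Qed.

Lemma phi_alpha_chinese u : (phi (eval_word d r [:: a_letter]) ^+ J u = 1)%g.
Proof.
apply/eqP; rewrite -order_dvdn (dvdn_trans (order_dvdG (in_setT _))) //.
by rewrite cardsT /dvdn chinese_modl // mod0n.
Qed.

Lemma phi_comm_word_relation : (x ^+ size relation_shifts = 1)%g.
Proof.
pose ws := [seq conj_word (J u) g | u <- relation_shifts].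
rewrite -(size_map (fun u => conj_word (J u) g)) -(phi_eval_flatten phiM (ws := ws));
  last by move=> _ /mapP[u _ ->]; apply/phi_eval_conj/phi_alpha_chinese.
apply: phi_eval_trivial => // m; rewrite eval_word_flatten_at big_map.
case: (eqVneq m n) => [->|mn]; last first.
  by rewrite big1_seq // => u _; rewrite eval_conj_word eval_comm_word_off ?conj1g.
have shifts_le3 : all (fun u => u <= 3) relation_shifts by [].
rewrite (eq_big_seq (fun u => tperms (r n) d_gt0 (shift_pairs u double_transposition))).
  by rewrite -[RHS](tperms_relation d_gt0 r_gt0 ltrd) /tperms big_flatten big_map.
move=> u Uu; apply: eval_conj_comm_word_at; first exact: (allP shifts_le3).
by rewrite chinese_modr.
Qed.

Lemma phi_comm_word_sqr : (x ^+ 2 = 1)%g.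
Proof.
rewrite expgS expg1 -phi_eval_cat //; apply: phi_eval_trivial => // m.
rewrite eval_word_cat_at; case: (eqVneq m n) => [->|mn].
  by rewrite eval_comm_word_at -tperms_cat tperms_double_transposition_sqr.
by rewrite eval_comm_word_off // mulg1.
Qed.

Lemma phi_comm_word : x = 1%g.
Proof.
have := phi_comm_word_relation; rewrite -[size _]/(1 + 2 * 6).
by rewrite expgD expgM phi_comm_word_sqr expg1n mulg1 expg1.
Qed.

End SmallQuotient.

Lemma admits_quotient_ge l M : 4 * r n + 4 <= l ->
  admits_quotient (@pt_mul d) (@pt_one d) (@pt_inv d) [:: alpha d; beta d r] l M ->
  d n <= M.
Proof.
move=> le_l [gT [phi [phiM phi_inj cardM]]]; rewrite leqNgt; apply/negP => small.
have g_ball : in_ball (@pt_mul d) (@pt_one d) (@pt_inv d) [:: alpha d; beta d r] l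
    (eval_word d r g) by exists g; rewrite size_comm_word.
have e_ball : in_ball (@pt_mul d) (@pt_one d) (@pt_inv d) [:: alpha d; beta d r] l
    (eval_word d r [::]) by exists [::].
have g_e : eval_word d r g = eval_word d r [::].
  by apply: phi_inj g_ball e_ball _; rewrite phi_comm_word ?phi_eval_nil // cardM.
have := congr1 (fun x : PT d => x n (scaled (r n) d_gt0 0)) g_e.
rewrite eval_comm_word_at [eval_word _ _ [::] n]/= perm1 (tperms_scaled d_gt0 r_gt0 ltrd) // => /eqP.
by rewrite (scaled_eq d_gt0 r_gt0 ltrd).
Qed.

End LowerBound.

Lemma exists_bound (A : eqType) (s : seq A) (Q : A -> nat -> Prop) :
  (forall a, a \in s -> exists m, Q a m) ->
  exists M, forall a, a \in s -> exists2 m, m < M & Q a m.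
Proof.
elim: s => [|a s IHs] exQ; first by exists 0.
have [m Qam] := exQ a (mem_head a s).
have [M QM] : exists M, forall b, b \in s -> exists2 m, m < M & Q b m.
  by apply: IHs => b sb; apply: exQ; rewrite in_cons sb orbT.
exists (maxn M m.+1) => b /predU1P[->|sb].
  by exists m; rewrite // leq_max ltnSn orbT.
by have [k ltkM Qbk] := QM b sb; exists k; rewrite // leq_max ltkM.
Qed.

Lemma exists_neq_dep (A : Type) (B : A -> Type) (f g : forall a, B a) :
  f <> g -> exists a, f a <> g a.
Proof.
move=> neq_fg; apply: NNPP => all_eq; apply/neq_fg/functional_extensionality_dep => a.
by apply: NNPP => neq_a; apply: all_eq; exists a.
Qed.

Fixpoint words_upto (l : nat) : seq (seq letter) :=
  if l is l'.+1 then [::] :: [seq a :: w | a <- enum {: letter}, w <- words_upto l']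
  else [:: [::]].

Lemma mem_words_upto l w : size w <= l -> w \in words_upto l.
Proof.
elim: l w => [|l IHl] [|a w] //= le_wl; rewrite in_cons; apply/orP; right.
by apply: (allpairs_f (fun a w => a :: w)); rewrite ?mem_enum // IHl.
Qed.

Section ResidualFiniteness.
Variables d r : nat -> nat.

Lemma separating_coordinates (ws : seq (seq letter)) : exists M,
  forall w1 w2, w1 \in ws -> w2 \in ws -> eval_word d r w1 <> eval_word d r w2 ->
  exists2 m, m < M & eval_word d r w1 m <> eval_word d r w2 m.
Proof.
pose Q (p : seq letter * seq letter) m :=
  eval_word d r p.1 = eval_word d r p.2 \/ eval_word d r p.1 m <> eval_word d r p.2 m.
have [|M QM] := @exists_bound _ [seq (w1, w2) | w1 <- ws, w2 <- ws] Q.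
  move=> [w1 w2] _; case: (classic (eval_word d r w1 = eval_word d r w2)) => [eq12|].
    by exists 0; left.
  by move=> /(@exists_neq_dep _ _ (eval_word d r w1))[m neq_m]; exists m; right.
exists M => w1 w2 ws1 ws2 neq12.
by have [m ltmM [//|neq_m]] := QM (w1, w2) (allpairs_f pair ws1 ws2); exists m.
Qed.

Section Restriction.
Variable M : nat.

Definition coord_points : Type := {m : 'I_M & 'I_(d m)}.

Definition restrict_fun (x : PT d) (t : coord_points) : coord_points :=
  Tagged (fun m : 'I_M => 'I_(d m)) (x (tag t) (tagged t)).

Lemma restrict_fun_inj x : injective (restrict_fun x).
Proof.
apply: (can_inj (g := restrict_fun (pt_inv x))).
by case=> m i; rewrite /restrict_fun /pt_inv /= permK.
Qed.

Definition restrict (x : PT d) : {perm coord_points} := perm (@restrict_fun_inj x).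

End Restriction.

Lemma exists_admits_quotient l : exists m,
  admits_quotient (@pt_mul d) (@pt_one d) (@pt_inv d) [:: alpha d; beta d r] l m.
Proof.
have [M sepM] := separating_coordinates (words_upto l).
exists #|{perm coord_points M}|, {perm coord_points M}, (@restrict M); split => //.
  move=> x y _ _; apply/permP => t.
  by rewrite permM !permE /restrict_fun /pt_mul /= permM.
move=> _ _ [w1 [le1 <-]] [w2 [le2 <-]] eq12; apply: NNPP => neq12.
have [m ltmM] := sepM w1 w2 (mem_words_upto le1) (mem_words_upto le2) neq12.
apply; apply/permP => i.
have := congr1 (fun s : {perm coord_points M} =>
  s (Tagged (fun m : 'I_M => 'I_(d m)) (i : 'I_(d (Ordinal ltmM))))) eq12.
by rewrite !permE /restrict_fun /= => eq_i; exact: eq_from_Tagged eq_i.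
Qed.

End ResidualFiniteness.

Lemma RF_growth_ge (T : Type) (mul : T -> T -> T) (one : T) (inv : T -> T)
    (S : seq T) l k :
  (exists m, admits_quotient mul one inv S l m) ->
  (forall m, admits_quotient mul one inv S l m -> k <= m) ->
  k <= RF_growth mul one inv S l.
Proof.
move=> exm ge_k; rewrite /RF_growth; case: excluded_middle_informative => [exm'|//].
by case: ex_minnP => m aq _; apply: ge_k; apply/admits_quotientbP.
Qed.

Lemma exists_prime_ge x : exists p, prime p && (x <= p).
Proof. by have [p lt_xp p_pr] := prime_above x; exists p; rewrite p_pr ltnW. Qed.

Definition prime_ge (x : nat) : nat := ex_minn (exists_prime_ge x).

Lemma prime_ge_prime x : prime (prime_ge x).
Proof. by rewrite /prime_ge; case: ex_minnP => p /andP[]. Qed.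

Lemma leq_prime_ge x : x <= prime_ge x.
Proof. by rewrite /prime_ge; case: ex_minnP => p /andP[]. Qed.

Lemma prime_ge_homo : {homo prime_ge : x y / x <= y}.
Proof.
move=> x y le_xy; rewrite {1}/prime_ge; case: ex_minnP => p _; apply.
by rewrite prime_ge_prime (leq_trans le_xy) ?leq_prime_ge.
Qed.

Section Construction.
Variable F : nat -> nat.
Hypothesis F_incr : forall m n, 0 < m -> m < n -> F m < F n.

Definition d_bound (x : nat) : nat := F (4 * x + 4) + 7 * x + 7.

Lemma d_bound_homo : {homo d_bound : x y / x <= y}.
Proof.
move=> x y; rewrite leq_eqVlt => /predU1P[->//|lt_xy].
by have := @F_incr (4 * x + 4) (4 * y + 4); rewrite /d_bound; lia.
Qed.

(* [r_and_P n] is the pair (r (n+1), d 1 * ... * d n): d n is chosen from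
   r (n+1), and the increments 2 d 1 ... d n keep r k = r (m+1) modulo d m
   for every k > m. *)
Fixpoint r_and_P (n : nat) : nat * nat :=
  if n is n'.+1 then
    ((r_and_P n').1 + 2 * (r_and_P n').2,
     (r_and_P n').2 * prime_ge (d_bound ((r_and_P n').1 + 2 * (r_and_P n').2)))
  else (1, 1).

Definition rseq (n : nat) : nat := (r_and_P n.-1).1.
Definition Pseq (n : nat) : nat := (r_and_P n.-1).2.
Definition dseq (n : nat) : nat := prime_ge (d_bound (rseq n.+1)).

Lemma rseqS n : 0 < n -> rseq n.+1 = rseq n + 2 * Pseq n.
Proof. by case: n. Qed.

Lemma PseqS n : 0 < n -> Pseq n.+1 = Pseq n * dseq n.
Proof. by case: n. Qed.

Lemma dseq_prime n : prime (dseq n).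
Proof. exact: prime_ge_prime. Qed.

Lemma dseq_ge n : 7 * rseq n.+1 + 7 <= dseq n.
Proof. by apply: leq_trans (leq_prime_ge _); rewrite /d_bound; lia. Qed.

Lemma Pseq_gt0 n : 0 < Pseq n.
Proof.
elim: n => [|[|n] IHn] //.
by rewrite PseqS // muln_gt0 IHn prime_gt0 ?dseq_prime.
Qed.

Lemma odd_rseq n : odd (rseq n).
Proof. by elim: n => [|[|n] IHn] //; rewrite rseqS // oddD IHn oddM. Qed.

Lemma rseq_ltS n : 0 < n -> rseq n < rseq n.+1.
Proof. by move=> n_gt0; rewrite rseqS // -addn1 leq_add2l muln_gt0 Pseq_gt0. Qed.

Lemma leq_rseq n : n <= rseq n.
Proof. by elim: n => [|[|n] IHn] //; apply: leq_trans (rseq_ltS _). Qed.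

Lemma dseq_gt_rseq n : 0 < n -> 7 * rseq n + 7 < dseq n.
Proof. by move=> n_gt0; have := rseq_ltS n_gt0; have := dseq_ge n; lia. Qed.

Lemma rseq_mono : {in [pred n | 0 < n] &, {homo rseq : m n / m < n}}.
Proof.
apply: homo_ltn_in => [y x z|i j i_gt0 _ k /andP[lt_ik _]|i i_gt0 _].
- exact: ltn_trans.
- by rewrite inE (ltn_trans i_gt0 lt_ik).
- exact: rseq_ltS.
Qed.

Lemma dseq_homo m n : 0 < m -> m <= n -> dseq m <= dseq n.
Proof.
move=> m_gt0; rewrite leq_eqVlt => /predU1P[->//|lt_mn].
by apply/prime_ge_homo/d_bound_homo/ltnW/rseq_mono.
Qed.

Lemma dseq_dvd_Pseq m n : 0 < m -> m < n -> dseq m %| Pseq n.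
Proof.
move=> m_gt0; elim: n => [//|n IHn]; rewrite ltnS leq_eqVlt => /predU1P[<-|lt_mn].
  by rewrite PseqS // dvdn_mull.
by rewrite PseqS ?(leq_trans m_gt0 (ltnW lt_mn)) // dvdn_mulr // IHn.
Qed.

Lemma rseq_mod m n : 0 < m -> m < n -> rseq n = rseq m.+1 %[mod dseq m].
Proof.
move=> m_gt0; elim: n => [//|n IHn]; rewrite ltnS leq_eqVlt => /predU1P[<-//|lt_mn].
rewrite rseqS; last by lia.
by rewrite -(divnK (dseq_dvd_Pseq m_gt0 lt_mn)) mulnA addnC modnMDl IHn.
Qed.

(* Coordinate m sees r n modulo d m as r (m+1) if m < n and as r n if m > n;
   either way the two 3-cycles have disjoint supports. *)
Lemma comm_beta_trivial n m : 0 < n -> m != n ->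
  [~ beta dseq rseq m, beta dseq rseq m ^ (alpha dseq m ^+ rseq n)]%g = 1%g.
Proof.
move=> n_gt0 mn; rewrite /beta /alpha.
case: eqP => [_|/eqP m_neq0]; first by rewrite expg1n conjg1 comm1g.
have m_gt0 : 0 < m by rewrite lt0n.
apply/eqP/commgP.
have := dseq_ge m; have := rseq_ltS m_gt0; have := leq_rseq m => ? ? ?.
case: (ltngtP m n) => [lt_mn|lt_nm|eq_mn]; last by rewrite eq_mn eqxx in mn.
- have ne2 : rseq m.+1 != 2 * rseq m.
    by apply: contraTneq (odd_rseq m.+1) => ->; rewrite oddM.
  apply: commute_three_cycle_conj;
    rewrite ?(rseq_mod m_gt0 lt_mn) ?modn_small //; lia.
- have := rseq_mono n_gt0 m_gt0 lt_nm; have := leq_rseq n => ? ?.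
  by apply: commute_three_cycle_conj; rewrite ?modn_small; lia.
Qed.

Lemma exists_rseq_window l : 8 <= l ->
  exists2 n, 0 < n & 4 * rseq n + 4 <= l < 4 * rseq n.+1 + 4.
Proof.
move=> le8l.
have ex_n : exists n, (0 < n) && (4 * rseq n + 4 <= l) by exists 1.
have le_n i : (0 < i) && (4 * rseq i + 4 <= l) -> i <= l.
  by move=> /andP[_ le_i]; have := leq_rseq i; lia.
have [n /andP[n_gt0 le_nl] max_n] := ex_maxnP ex_n le_n.
exists n => //; rewrite le_nl ltnNge /=; apply/negP => le_Sn.
by have := max_n n.+1; rewrite le_Sn ltn0Sn => /(_ isT); rewrite ltnn.
Qed.

Lemma F_lt_dseq n l : 0 < l -> l < 4 * rseq n.+1 + 4 -> F l < dseq n.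
Proof.
move=> l_gt0 lt_l; apply: leq_trans (F_incr l_gt0 lt_l) _.
by apply: leq_trans (leq_prime_ge _); rewrite /d_bound; lia.
Qed.

End Construction.

Theorem theorem3p14 :
  exists C0 : nat, 0 < C0 /\
  forall F : nat -> nat,
    (forall m n, 0 < m -> m < n -> F m < F n) ->
    exists d r : nat -> nat,
      [/\ (forall m n, 0 < m -> m <= n -> d m <= d n),
          (forall n, 0 < n ->
             prime (d n) /\ 5 <= d n /\ 2 * r n + 1 <= d n /\ n <= r n /\
             n <= d n - 2 * r n /\ 3 * r n <= d n),
          (forall m n, 0 < m -> m < n -> r m < r n)
        & (forall n, C0 <= n -> F n <= RF_alpha_beta d r n)].
Proof.
exists 8; split => // F F_incr; exists (dseq F), (rseq F); split.
- exact: dseq_homo.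
- move=> n n_gt0; have lt_rd := dseq_gt_rseq F n_gt0; have le_nr := leq_rseq F n.
  by split; [exact: dseq_prime | lia].
- move=> m n m_gt0 lt_mn.
  exact: rseq_mono m_gt0 (ltn_trans m_gt0 lt_mn) lt_mn.
move=> l le8l; have [n n_gt0 /andP[le_l lt_l]] := exists_rseq_window F le8l.
apply: leq_trans (ltnW (F_lt_dseq F_incr _ lt_l)) _; first by lia.
apply: RF_growth_ge => [|M]; first exact: exists_admits_quotient.
have lt_rd := dseq_gt_rseq F n_gt0; have le_nr := leq_rseq F n.
apply: admits_quotient_ge le_l => //; [exact: dseq_prime | lia | lia |].
by move=> m; apply: comm_beta_trivial.
Qed.
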